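(* Let $G$ be a finite simple undirected graph with property S. Then $G$ is a $\mathcal{P}$-position of Graph Nimors (i.e. the player not to move has a winning strategy, equivalently its Nim value is $0$) if and only if $G$ has an even number of edges.
   Context: Graph Nimors is a two-player impartial game played on a finite simple undirected graph. A move consists of either deleting one edge, or contracting one edge $uv$: removing the adjacent vertices $u,v$ and inserting a new vertex $w$ adjacent to every vertex (other than $u,v$) that was adjacent to $u$ or to $v$ (so the result is again simple). Players alternate; when no edges remain no move is possible, and the player who made the last move wins (normal play). A position is a $\mathcal{P}$-position if the previous player (the one not about to move) can force a win, and an $\mathcal{N}$-position if the next player to move can force a win. The blocks of a graph are its maximal biconnected subgraphs, where a single edge not on any cycle also counts as a block; the edges of a graph are partitioned among its blocks. A graph $G$ has property S if it contains no edge both of whose endpoints have degree greater than two, and no block of $G$ is a triangle (a 3-cycle). *)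

From mathcomp Require Import all_boot.
Set Implicit Arguments. Unset Strict Implicit. Unset Printing Implicit Defensive.

Section GraphNimors.
Variable T : finType.

(* A finite simple undirected graph on (a subset of) the finite vertex type T
   is represented by its edge set: a set of 2-element vertex sets.
   Isolated vertices play no role in the game nor in property S. *)
Definition simple_graph (E : {set {set T}}) : Prop :=
  forall e, e \in E -> #|e| = 2.

Definition degree (E : {set {set T}}) (x : T) : nat :=
  #|[set e in E | x \in e]|.

(* Contraction of the edge uv: the merged vertex w is represented by the
   label u (v is removed); every edge f <> uv is mapped by v |-> u. *)
Definition merge (u v : T) (x : T) : T := if x == v then u else x.

Definition contract (E : {set {set T}}) (u v : T) : {set {set T}} :=
  (fun f : {set T} => merge u v @: f) @: (E :\ [set u; v]).

Inductive move (E : {set {set T}}) : {set {set T}} -> Prop :=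
| move_delete e : e \in E -> move E (E :\ e)
| move_contract u v : u != v -> [set u; v] \in E -> move E (contract E u v).

(* Outcome classes under normal play (the game is finite, so these
   inductive predicates are the usual P/N-positions). *)
Inductive Ppos : {set {set T}} -> Prop :=
| Ppos_intro E : (forall E', move E E' -> Npos E') -> Ppos E
with Npos : {set {set T}} -> Prop :=
| Npos_intro E E' : move E E' -> Ppos E' -> Npos E.

(* Blocks: maximal biconnected subgraphs, a subgraph being given by its
   (nonempty) edge set F, with vertex set the vertices covered by F. *)
Definition verts (F : {set {set T}}) : {set T} := \bigcup_(e in F) e.

Definition adjF (F : {set {set T}}) : rel T := fun a b => [set a; b] \in F.

Definition connected_on (F : {set {set T}}) (W : {set T}) : Prop :=
  forall x y, x \in W -> y \in W -> connect (adjF F) x y.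

(* connected and without cut vertex (a single edge K2 counts) *)
Definition biconnected (F : {set {set T}}) : Prop :=
  [/\ F != set0,
      connected_on F (verts F)
    & forall z, z \in verts F ->
        connected_on [set e in F | z \notin e] (verts F :\ z)].

Definition block (E F : {set {set T}}) : Prop :=
  [/\ F \subset E, biconnected F
    & forall F' : {set {set T}}, F \subset F' -> F' \subset E -> biconnected F' -> F' = F].

Definition is_triangle (F : {set {set T}}) : Prop :=
  exists a b c : T, [/\ a != b, b != c, a != c &
    F = [set [set a; b]; [set b; c]; [set a; c]]].

Definition property_S (E : {set {set T}}) : Prop :=
  (forall u v, u != v -> [set u; v] \in E ->
      (degree E u <= 2) || (degree E v <= 2))
  /\ ~ (exists F, block E F /\ is_triangle F).

End GraphNimors.

(* Property S is used only through a weaker invariant: every edge has an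
   endpoint of degree at most 2 and there is no triangle.  Indeed, a triangle
   in such a graph is a whole block, since a larger biconnected subgraph would
   attach to it at two corners, which would then be adjacent vertices of
   degree at least 3.  Unlike property S, the invariant is inherited by
   subgraphs.  Contracting an edge uv whose endpoint v has degree at most 2
   either merely deletes uv (v is a leaf) or replaces the path u-v-x by the
   edge ux, absent by triangle-freeness; deleting ux then leaves a subgraph
   with two edges fewer.  So from a graph with an even number of edges every
   move leads to an odd graph or to a graph from which one deletion restores
   an even one, and by induction the outcome is the parity of the number of
   edges. *)

From mathcomp Require Import all_boot perm.
Set Implicit Arguments. Unset Strict Implicit. Unset Printing Implicit Defensive.

Lemma imset_set2 (aT rT : finType) (f : aT -> rT) (a b : aT) :
  f @: [set a; b] = [set f a; f b].
Proof. by rewrite imsetU1 imset_set1. Qed.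

Lemma connect_crossing (T : finType) (r : rel T) (S : {set T}) x y :
  connect r x y -> x \notin S -> y \in S ->
  exists p t, [/\ p \notin S, t \in S & r p t].
Proof.
move=> /connectP[s]; elim: s x => [|z s IHs] x /=; first by move=> _ -> /negPf ->.
move=> /andP[rxz pz] ly xS yS; case: (boolP (z \in S)) => zS; first by exists x, z.
exact: IHs pz ly zS yS.
Qed.

Section WeakS.
Variable T : finType.
Implicit Types (E F : {set {set T}}) (u v x : T).

Definition low_degree_edges E := forall u v, u != v -> [set u; v] \in E ->
  (degree E u <= 2) || (degree E v <= 2).

Definition triangle_free E := forall a b c, a != b -> b != c -> a != c ->
  [set a; b] \in E -> [set b; c] \in E -> [set a; c] \in E -> False.

Definition weak_S E := [/\ simple_graph E, low_degree_edges E & triangle_free E].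

Lemma degreeS E F x : F \subset E -> degree F x <= degree E x.
Proof.
move=> sFE; apply: subset_leq_card; apply/subsetP=> e.
by rewrite !inE => /andP[/(subsetP sFE) -> ->].
Qed.

Lemma weak_S_sub E F : F \subset E -> weak_S E -> weak_S F.
Proof.
move=> sFE [sE lE tE]; split.
- by move=> e /(subsetP sFE) /sE.
- move=> u v uv /(subsetP sFE) /(lE _ _ uv) /orP[] du; apply/orP; [left|right];
  exact: leq_trans (degreeS _ sFE) du.
- move=> a b c ab bc ac ? ? ?; apply: (tE a b c ab bc ac); exact: (subsetP sFE).
Qed.

Lemma simple_edge_at E e v : simple_graph E -> e \in E -> v \in e ->
  exists2 x, x != v & e = [set v; x].
Proof.
move=> sE eE; have /eqP/cards2P[p [q [pq ->]]] := sE e eE.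
rewrite !inE => /orP[]/eqP->; first by exists q; rewrite // eq_sym.
by exists p; rewrite // setUC.
Qed.

Lemma degree_ge3 E t x y z :
  x != t -> y != t -> z != t -> x != y -> y != z -> x != z ->
  [set t; x] \in E -> [set t; y] \in E -> [set t; z] \in E -> 3 <= degree E t.
Proof.
move=> xt yt zt xy yz xz tx ty tz.
have edge_neq p q : p != t -> p != q -> [set t; p] != [set t; q].
  move=> pt pq; apply: contraNneq pq => e.
  by have := set22 t p; rewrite e !inE (negPf pt).
have sub : [set [set t; x]; [set t; y]; [set t; z]] \subset [set e in E | t \in e].
  by apply/subsetP => e; rewrite !inE => /orP[/orP[]|]/eqP->; rewrite ?tx ?ty ?tz !inE eqxx.
apply: leq_trans (subset_leq_card sub).
by rewrite setUC cardsU1 cards2 !inE negb_or !edge_neq // eq_sym.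
Qed.

Definition relabel (s : {perm T}) E := [set s @: f | f : {set T} in E].

Section Relabel.
Variable s : {perm T}.

Lemma card_relabel E : #|relabel s E| = #|E|.
Proof. exact/card_imset/imset_inj/perm_inj. Qed.

Lemma mem_relabel E (f : {set T}) : (s @: f \in relabel s E) = (f \in E).
Proof. exact/mem_imset/imset_inj/perm_inj. Qed.

Lemma mem2_relabel E u v : ([set s u; s v] \in relabel s E) = ([set u; v] \in E).
Proof. by rewrite -imset_set2 mem_relabel. Qed.

Lemma imset_permKV (A : {set T}) : s @: ((s^-1)%g @: A) = A.
Proof. by rewrite -imset_comp (eq_imset _ (permKV s)) imset_id. Qed.

Lemma relabelD1 E e : relabel s (E :\ e) = relabel s E :\ (s @: e).
Proof.
apply/setP => f; rewrite -[f]imset_permKV.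
by rewrite !inE !mem_relabel !inE (inj_eq (imset_inj (@perm_inj _ s))).
Qed.

Lemma degree_relabel E x : degree (relabel s E) (s x) = degree E x.
Proof.
rewrite /degree -(card_relabel [set e in E | x \in e]); apply: eq_card => f.
rewrite -[f]imset_permKV.
by rewrite !inE !mem_relabel !inE (mem_imset _ _ (@perm_inj _ s)).
Qed.

Lemma weak_S_relabel E : weak_S E -> weak_S (relabel s E).
Proof.
move=> [sE lE tE]; split.
- by move=> _ /imsetP[f /sE f2 ->]; rewrite card_imset //; apply: perm_inj.
- move=> u v; rewrite -(permKV s u) -(permKV s v) (inj_eq (@perm_inj _ s)) mem2_relabel.
  by rewrite !degree_relabel; apply: lE.
- move=> a b c; rewrite -(permKV s a) -(permKV s b) -(permKV s c) !(inj_eq (@perm_inj _ s)).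
  by rewrite !mem2_relabel; apply: tE.
Qed.

End Relabel.

Lemma contract_tperm E u v : contract E u v = relabel (tperm u v) (contract E v u).
Proof.
rewrite /relabel /contract -imset_comp setUC; apply: eq_imset => f /=.
rewrite -imset_comp; apply: eq_imset => x /=; rewrite /merge.
case: (eqVneq x u) => [->|xu]; first by rewrite tpermR; case: ifP.
case: (eqVneq x v) => [->|xv]; first by rewrite tpermR.
by rewrite tpermD // eq_sym.
Qed.

Lemma merge_notin u v (f : {set T}) : v \notin f -> merge u v @: f = f.
Proof.
move=> vf; rewrite -[RHS]imset_id; apply: eq_in_imset => x xf.
by rewrite /merge; case: eqVneq => // xv; rewrite -xv xf in vf.
Qed.

Lemma contract_leaf E u v :
  (forall f, f \in E :\ [set u; v] -> v \notin f) -> contract E u v = E :\ [set u; v].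
Proof.
by move=> notv; rewrite -[RHS]imset_id; apply: eq_in_imset => f /notv/merge_notin.
Qed.

Lemma contract_path E u v x : x != v -> [set v; x] \in E :\ [set u; v] ->
  (forall f, f \in E :\ [set u; v] -> v \in f -> f = [set v; x]) ->
  contract E u v = [set u; x] |: (E :\ [set u; v] :\ [set v; x]).
Proof.
move=> xv vxE only_vx.
rewrite /contract -{1}[E :\ _](setD1K vxE) imsetU1 imset_set2 /merge eqxx (negPf xv).
congr (_ |: _); rewrite -[RHS]imset_id; apply: eq_in_imset => f.
rewrite in_setD1 => /andP[fvx fE]; apply: merge_notin.
by apply: contraNN fvx => vf; rewrite (only_vx f fE vf).
Qed.

Definition contraction_reduces E C :=
  (weak_S C /\ #|E| = #|C|.+1) \/
  exists2 e, e \in C & weak_S (C :\ e) /\ #|E| = #|C :\ e|.+2.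

Lemma weak_S_contract_low_degree E u v :
  weak_S E -> u != v -> [set u; v] \in E -> degree E v <= 2 ->
  contraction_reduces E (contract E u v).
Proof.
move=> wE uv uvE dv; have [sE _ tE] := wE.
set R := [set f in E :\ [set u; v] | v \in f].
have inR f : f \in E :\ [set u; v] -> v \in f -> f \in R by move=> fE vf; rewrite inE fE.
have : #|R| <= 1.
  move: dv; rewrite /degree (cardsD1 [set u; v]) !inE uvE eqxx orbT add1n ltnS.
  by congr (_ <= _); apply: eq_card => f; rewrite !inE andbA.
have cardE : #|E| = #|E :\ [set u; v]|.+1 by rewrite (cardsD1 [set u; v]) uvE.
rewrite /contraction_reduces leq_eqVlt ltnS leqn0 cards_eq0.
case/orP=> [/cards1P[e Re]|/eqP R0]; last first.
  rewrite contract_leaf => [|f fE]; last by apply/negP => /(inR f fE); rewrite R0 inE.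
  by left; rewrite cardE; split=> //; apply: weak_S_sub wE; apply: subsetDl.
have /setIdP[eE ve] : e \in R by rewrite Re set11.
have [x xv ex] := simple_edge_at sE (setD1P eE).2 ve; rewrite {}ex in Re eE.
have only_vx f : f \in E :\ [set u; v] -> v \in f -> f = [set v; x].
  by move=> fE vf; apply/set1P; rewrite -Re inR.
have xu : x != u by apply: contraTneq eE => ->; rewrite setUC !inE eqxx.
have uxE : [set u; x] \notin E.
  by apply/negP => uxE; apply: (tE u v x uv _ _ uvE _ uxE); rewrite 1?eq_sym ?(setD1P eE).2.
right; rewrite (contract_path xv eE only_vx); exists [set u; x]; first exact: setU11.
rewrite setU1K; last by rewrite !in_setD1 (negPf uxE) !andbF.
split; first by apply: weak_S_sub wE; apply: subset_trans (subsetDl _ _) (subsetDl _ _).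
by rewrite cardE (cardsD1 [set v; x]) eE.
Qed.

Lemma weak_S_contract E u v : weak_S E -> u != v -> [set u; v] \in E ->
  contraction_reduces E (contract E u v).
Proof.
move=> wE uv uvE; have [_ lE _] := wE.
have /orP[du|dv] := lE _ _ uv uvE; last exact: weak_S_contract_low_degree.
rewrite contract_tperm /contraction_reduces.
have vu : v != u by rewrite eq_sym.
have vuE : [set v; u] \in E by rewrite setUC.
have [[wC cardC]|[e eC [wCe cardCe]]] := weak_S_contract_low_degree wE vu vuE du.
  by left; rewrite card_relabel; split => //; apply: weak_S_relabel.
right; exists (tperm u v @: e); first by rewrite mem_relabel.
by rewrite -relabelD1 card_relabel; split => //; apply: weak_S_relabel.
Qed.

Lemma verts_sub F F' : F \subset F' -> verts F \subset verts F'.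
Proof.
move=> sFF'; apply/subsetP => x /bigcupP[e eF xe].
by apply/bigcupP; exists e; rewrite ?(subsetP sFF').
Qed.

Section Triangle.
Variables a b c : T.
Hypotheses (ab : a != b) (bc : b != c) (ac : a != c).

Definition triangle := [set [set a; b]; [set b; c]; [set a; c]].
Let corners := [set a; b; c].

Lemma triangle_edge x y : x \in corners -> y \in corners -> x != y ->
  [set x; y] \in triangle.
Proof.
rewrite !inE => /orP[/orP[]|]/eqP-> /orP[/orP[]|]/eqP->; rewrite ?eqxx // => _;
by rewrite ?eqxx ?orbT // setUC eqxx ?orbT.
Qed.

Lemma triangle_others t : t \in corners ->
  exists y z, [/\ y \in corners, z \in corners, y != t, z != t & y != z].
Proof.
rewrite !inE => /orP[/orP[]|]/eqP->; [exists b, c | exists a, c | exists a, b];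
by rewrite !inE !eqxx ?orbT; split; rewrite // eq_sym.
Qed.

Lemma verts_triangle : verts triangle = corners.
Proof.
apply/setP => x; apply/bigcupP/idP => [[e]|xS].
  by rewrite !inE => /orP[/orP[]|]/eqP->; rewrite !inE => /orP[]/eqP->; rewrite eqxx ?orbT.
have [y [z [yS _ yx _ _]]] := triangle_others xS.
by exists [set x; y]; rewrite ?set21 // triangle_edge // eq_sym.
Qed.

Lemma triangle_biconnected : biconnected triangle.
Proof.
rewrite /biconnected verts_triangle; split.
- by apply/set0Pn; exists [set a; b]; rewrite !inE eqxx.
- move=> x y xS yS; case: (eqVneq x y) => [->|xy]; first exact: connect0.
  by apply: connect1; rewrite /adjF triangle_edge.
- move=> z _ x y; rewrite !in_setD1 => /andP[xz xS] /andP[yz yS].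
  case: (eqVneq x y) => [->|xy]; first exact: connect0.
  apply: connect1; rewrite /adjF inE triangle_edge //= !inE negb_or.
  by rewrite eq_sym xz eq_sym yz.
Qed.

Lemma triangle_corner_degree E t p : triangle \subset E ->
  t \in corners -> p \notin corners -> [set p; t] \in E -> 3 <= degree E t.
Proof.
move=> triE tS pS ptE; have [y [z [yS zS yt zt yz]]] := triangle_others tS.
have p_neq q : q \in corners -> p != q by move=> qS; apply: contraNneq pS => ->.
have cornerE q : q \in corners -> q != t -> [set t; q] \in E.
  by move=> qS qt; apply: (subsetP triE); apply: triangle_edge; rewrite // eq_sym.
apply: (degree_ge3 (x := p) (y := y) (z := z)) => //;
  first [exact: p_neq | exact: cornerE | by rewrite setUC].
Qed.

Lemma triangle_block E : simple_graph E -> low_degree_edges E -> triangle \subset E ->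
  block E triangle.
Proof.
move=> sE lE triE; split=> // [|F' triF' F'E [_ conF' cutF']].
  exact: triangle_biconnected.
apply/eqP; rewrite eqEsubset triF' andbT; apply/subsetP => g gF'; apply: contraT => gT.
have [w wg wS] : exists2 w, w \in g & w \notin corners.
  have /eqP/cards2P[p [q [pq gpq]]] := sE g (subsetP F'E g gF').
  case: (boolP (p \in corners)) => pS; last by exists p; rewrite // gpq set21.
  case: (boolP (q \in corners)) => qS; last by exists q; rewrite // gpq set22.
  by move: gT; rewrite gpq triangle_edge.
have cornersF' : corners \subset verts F' by rewrite -verts_triangle verts_sub.
have wF' : w \in verts F' by apply/bigcupP; exists g.
have aS : a \in corners by rewrite !inE eqxx.
have [p [t [pS tS ptF']]] :=
  connect_crossing (conF' _ _ wF' (subsetP cornersF' a aS)) wS aS.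
have [s [_ [sS _ st _ _]]] := triangle_others tS.
have tF' : t \in verts F' by apply/bigcupP; exists [set p; t]; rewrite ?set22.
have wt : w \in verts F' :\ t by rewrite in_setD1 wF' andbT; apply: contraNneq wS => ->.
have sF't : s \in verts F' :\ t by rewrite in_setD1 st (subsetP cornersF').
have [p' [t' [p'S t'S]]] := connect_crossing (cutF' t tF' w s wt sF't) wS sS.
rewrite /adjF inE => /andP[p't'F' tp't'].
have tt' : t != t' by apply: contraNneq tp't' => ->; rewrite set22.
have := lE t t' tt' (subsetP triE _ (triangle_edge tS t'S tt')).
rewrite leqNgt (triangle_corner_degree triE tS pS (subsetP F'E _ ptF')).
by rewrite leqNgt (triangle_corner_degree triE t'S p'S (subsetP F'E _ p't'F')).
Qed.

End Triangle.

Lemma property_S_triangle_free E : simple_graph E -> property_S E -> triangle_free E.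
Proof.
move=> sE [lE noTri] a b c ab bc ac abE bcE acE; apply: noTri.
exists (triangle a b c); split; last by exists a, b, c.
apply: triangle_block => //.
by apply/subsetP => e; rewrite !inE => /orP[/orP[]|]/eqP->.
Qed.

Lemma move_card E E' : move E E' -> #|E'| < #|E|.
Proof.
case=> [e eE|u v _ uvE]; first by rewrite (cardsD1 e E) eE.
by apply: leq_ltn_trans (leq_imset_card _ _) _; rewrite (cardsD1 [set u; v] E) uvE.
Qed.

Lemma edge_set_card_ind (P : {set {set T}} -> Prop) :
  (forall E, (forall E', #|E'| < #|E| -> P E') -> P E) -> forall E, P E.
Proof.
move=> IH E; have [n] := ubnP #|E|; elim: n E => // n IHn E /ltnSE cardE.
by apply: IH => E' ltE'; apply: IHn; apply: leq_trans ltE' cardE.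
Qed.

Lemma PposP E : Ppos E -> forall E', move E E' -> Npos E'.
Proof. by case. Qed.

Lemma NposP E : Npos E -> exists2 E', move E E' & Ppos E'.
Proof. by case=> {}E E'; exists E'. Qed.

Lemma Ppos_Npos E : Ppos E -> ~ Npos E.
Proof.
elim/edge_set_card_ind: E => E IH PE /NposP[E' mvE' PE'].
exact: IH (move_card mvE') PE' (PposP PE mvE').
Qed.

Lemma weak_S_outcome E : weak_S E -> if odd #|E| then Npos E else Ppos E.
Proof.
elim/edge_set_card_ind: E => E IH wE.
have delete_edge e : e \in E ->
    #|E| = #|E :\ e|.+1 /\ (if odd #|E :\ e| then Npos (E :\ e) else Ppos (E :\ e)).
  move=> eE; have cardE : #|E| = #|E :\ e|.+1 by rewrite (cardsD1 e) eE.
  by split=> //; apply: IH; [rewrite cardE | apply: weak_S_sub wE; apply: subsetDl].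
case: ifP => oddE.
  have [e eE] : exists e, e \in E by apply/set0Pn; rewrite -card_gt0; case: #|E| oddE.
  have [cardE] := delete_edge e eE; rewrite cardE /= in oddE.
  by rewrite (negPf oddE); apply/Npos_intro/move_delete.
constructor => _ [e eE|u v uv uvE].
  have [cardE] := delete_edge e eE; rewrite cardE /= in oddE.
  by rewrite (negbFE oddE).
have [[wC cardC]|[e eC [wCe cardCe]]] := weak_S_contract wE uv uvE.
  have := IH _ (move_card (move_contract uv uvE)) wC.
  by rewrite cardC /= in oddE; rewrite (negbFE oddE).
apply: (Npos_intro (move_delete eC)).
have ltE : #|contract E u v :\ e| < #|E| by rewrite cardCe ltnW.
by have := IH _ ltE wCe; rewrite cardCe /= negbK in oddE; rewrite oddE.
Qed.

End WeakS.

Theorem theorem3 (T : finType) (E : {set {set T}}) :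
  simple_graph E -> property_S E ->
  (Ppos E <-> ~~ odd #|E|).
Proof.
move=> sE SE.
have wE : weak_S E by split=> //; [case: SE | exact: property_S_triangle_free].
have := weak_S_outcome wE; case: (odd #|E|) => outcome; split=> //.
by move=> PE; case: (Ppos_Npos PE outcome).
Qed.
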